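(* Fix an undirected unweighted graph $G=(V,E)$ on $N$ vertices and $\delta\in[0,1]$. Let $r_1=1$ and $r_2\ge r_1$. There exists a coupling of two mixed $\delta$-updating chains $(S_t^{(1)})_{t\ge0}$ with mutant fitness $r_1$ and $(S_t^{(2)})_{t\ge0}$ with mutant fitness $r_2$, both started from the same $S_0\subseteq V$, such that $S_t^{(2)}\supseteq S_t^{(1)}$ for all $t\ge0$.
   Context: Mixed $\delta$-updating with mutant fitness $r$ on $G$: $S_t$ is the set of mutants after $t$ steps; each mutant has fitness $r$ and each wild-type fitness $1$; $f_S(x)$ is the fitness at $x$ when $S$ is the mutant set. At each step, with probability $\delta$ a death-Birth step: choose $v$ uniformly to die, choose a neighbor $u$ of $v$ with probability proportional to $f_S(u)$, $u$ copies its type onto $v$; with probability $1-\delta$ a Birth-death step: choose $u$ with probability proportional to $f_S(u)$ among all vertices, choose a uniformly random neighbor $v$ of $u$, $u$ copies its type onto $v$. *)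

From HB Require Import structures.
From mathcomp Require Import all_boot all_order all_algebra.
From mathcomp Require Import reals.
Set Implicit Arguments. Unset Strict Implicit. Unset Printing Implicit Defensive.
Import Order.TTheory GRing.Theory Num.Theory.
Local Open Scope ring_scope.

Section Moran.
Variables (R : realType) (V : finType) (adj : rel V).

Definition fit (r : R) (S : {set V}) (x : V) : R := if x \in S then r else 1.

Definition nbhd (v : V) : {set V} := [set u | adj v u].
Definition deg (v : V) : nat := #|nbhd v|.

Definition copy_type (S : {set V}) (u v : V) : {set V} :=
  if u \in S then v |: S else S :\ v.

Definition dB_prob (r : R) (S S' : {set V}) : R :=
  \sum_(v : V) \sum_(u : V | adj v u)
     (#|V|%:R)^-1 * (fit r S u / \sum_(w in nbhd v) fit r S w)
     * (S' == copy_type S u v)%:R.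

Definition Bd_prob (r : R) (S S' : {set V}) : R :=
  \sum_(u : V) \sum_(v : V | adj u v)
     (fit r S u / \sum_(w : V) fit r S w) * ((deg u)%:R)^-1
     * (S' == copy_type S u v)%:R.

Definition mixed_P (delta r : R) (S S' : {set V}) : R :=
  delta * dB_prob r S S' + (1 - delta) * Bd_prob r S S'.

Definition coupling_kernel (P1 P2 : {set V} -> {set V} -> R)
  (K : {set V} * {set V} -> {set V} * {set V} -> R) : Prop :=
  (forall x y, 0 <= K x y) /\
  (forall A B A', \sum_(B' : {set V}) K (A, B) (A', B') = P1 A A') /\
  (forall A B B', \sum_(A' : {set V}) K (A, B) (A', B') = P2 B B').

Fixpoint chain_law (K : {set V} * {set V} -> {set V} * {set V} -> R)
  (x0 : {set V} * {set V}) (t : nat) : {set V} * {set V} -> R :=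
  match t with
  | 0 => fun x => (x == x0)%:R
  | t'.+1 => fun y => \sum_(x : {set V} * {set V}) chain_law K x0 t' x * K x y
  end.

End Moran.

From HB Require Import structures.
From mathcomp Require Import all_boot all_order all_algebra.
From mathcomp Require Import reals.
Set Implicit Arguments. Unset Strict Implicit. Unset Printing Implicit Defensive.
Import Order.TTheory GRing.Theory Num.Theory.
Local Open Scope ring_scope.

(* One step of the mixed chain draws an ordered pair (u, v), the parent u and
   the replaced vertex v, and lets u copy its type onto v.  Compare chain 1 in
   state A with chain 2 in state B ⊇ A: since r1 = 1 the pair weights of chain 1
   do not depend on A, and raising the fitness of the mutants of B to r2 ≥ 1 can
   only increase the weight of pairs with parent in B and only decrease that of
   the others.  Couple the two pair laws maximally: with probability the minimum
   of the two weights both chains use the same pair, which preserves A ⊆ B;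
   otherwise chain 1 uses a parent outside B, hence outside A, which can only
   remove a vertex from A, while chain 2 uses a parent in B, which can only add
   a vertex to B. *)

Lemma sumr_indicator (R : pzSemiRingType) (I : finType) (c : I) :
  \sum_(i : I) ((i == c)%:R : R) = 1.
Proof. by rewrite (bigD1 c) //= eqxx big1 ?addr0 // => i /negbTE ->. Qed.

Lemma sumr_pair (R : nmodType) (I J : finType) (F : I * J -> R) :
  \sum_(x : I * J) F x = \sum_(i : I) \sum_(j : J) F (i, j).
Proof. by rewrite pair_bigA; apply: eq_bigr => -[]. Qed.

Section MaximalCoupling.
Variables (R : realFieldType) (T : finType).
Implicit Types w : T -> R.

Definition excess w1 w2 (x : T) : R := w1 x - Num.min (w1 x) (w2 x).

(* The diagonal carries the common mass [min w1 w2]; the excesses of [w1] and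
   [w2] are matched independently, the normalisation [0 / 0 = 0] covering [w1 = w2]. *)
Definition maximal_coupling w1 w2 (x y : T) : R :=
  (y == x)%:R * Num.min (w1 x) (w2 x)
  + excess w1 w2 x * excess w2 w1 y / \sum_z excess w1 w2 z.

Lemma excess_ge0 w1 w2 x : 0 <= excess w1 w2 x.
Proof. by rewrite subr_ge0 ge_min lexx. Qed.

Lemma excess_neq0 w1 w2 x : (excess w1 w2 x != 0) = (w2 x < w1 x).
Proof.
rewrite /excess subr_eq0; have [le12|lt21] := leP (w1 x) (w2 x).
  by rewrite eqxx.
by rewrite gt_eqF.
Qed.

Lemma sum_excessC w1 w2 :
  \sum_x w1 x = \sum_x w2 x -> \sum_x excess w1 w2 x = \sum_x excess w2 w1 x.
Proof.
move=> sum12; rewrite !sumrB sum12; congr (_ - _).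
by apply: eq_bigr => x _; rewrite minC.
Qed.

Lemma maximal_couplingC w1 w2 x y : \sum_z w1 z = \sum_z w2 z ->
  maximal_coupling w2 w1 y x = maximal_coupling w1 w2 x y.
Proof.
move=> sum12; rewrite /maximal_coupling -sum_excessC // [excess w2 w1 y * _]mulrC.
by rewrite [y == x]eq_sym minC; case: eqVneq => [->|_]; rewrite ?mul0r.
Qed.

Lemma maximal_coupling_ge0 w1 w2 x y :
  (forall z, 0 <= w1 z) -> (forall z, 0 <= w2 z) -> 0 <= maximal_coupling w1 w2 x y.
Proof.
move=> w1_ge0 w2_ge0; rewrite addr_ge0 ?mulr_ge0 ?excess_ge0 ?le_min ?w1_ge0 ?w2_ge0 //.
by rewrite invr_ge0 sumr_ge0 // => z _; apply: excess_ge0.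
Qed.

Lemma maximal_coupling_marginal1 w1 w2 x : \sum_z w1 z = \sum_z w2 z ->
  \sum_y maximal_coupling w1 w2 x y = w1 x.
Proof.
move=> sum12; rewrite big_split /= -!big_distrl -big_distrr /= -sum_excessC //.
rewrite sumr_indicator mul1r -mulrA.
have [sum0|sum_neq0] := eqVneq (\sum_z excess w1 w2 z) 0.
  have e0 : excess w1 w2 x = 0.
    by apply: (psumr_eq0P _ sum0) => // z _; apply: excess_ge0.
  by rewrite e0 mul0r addr0; move/eqP: e0; rewrite subr_eq0 eq_sym => /eqP.
by rewrite divff // mulr1 /excess addrC subrK.
Qed.

Lemma maximal_coupling_marginal2 w1 w2 y : \sum_z w1 z = \sum_z w2 z ->
  \sum_x maximal_coupling w1 w2 x y = w2 y.
Proof.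
move=> sum12; under eq_bigr do rewrite -maximal_couplingC //.
exact: maximal_coupling_marginal1.
Qed.

Lemma maximal_coupling_offdiag w1 w2 x y : x != y ->
  maximal_coupling w1 w2 x y != 0 -> w2 x < w1 x /\ w1 y < w2 y.
Proof.
move=> /negbTE neq_xy; rewrite /maximal_coupling [y == x]eq_sym neq_xy mul0r add0r.
by rewrite !mulf_eq0 !negb_or -!excess_neq0 => /andP[/andP[-> ->]].
Qed.

End MaximalCoupling.

Section CoupledKernel.
Variables (R : realType) (V T : finType) (update : {set V} -> T -> {set V}).

Definition pushforward (w : {set V} -> T -> R) (S S' : {set V}) : R :=
  \sum_x w S x * (S' == update S x)%:R.

Definition coupled_kernel (J : {set V} -> {set V} -> T -> T -> R)
    (p q : {set V} * {set V}) : R :=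
  \sum_x \sum_y
    J p.1 p.2 x y * ((q.1 == update p.1 x)%:R * (q.2 == update p.2 y)%:R).

Variables (w1 w2 : {set V} -> T -> R) (J : {set V} -> {set V} -> T -> T -> R).

Lemma coupled_kernel_ge0 p q :
  (forall A B x y, 0 <= J A B x y) -> 0 <= coupled_kernel J p q.
Proof. by move=> J_ge0; do 2![apply: sumr_ge0 => ? _]; rewrite !mulr_ge0. Qed.

Lemma coupled_kernel_marginal1 A B A' :
  (forall A B x, \sum_y J A B x y = w1 A x) ->
  \sum_B' coupled_kernel J (A, B) (A', B') = pushforward w1 A A'.
Proof.
move=> J_marg1; rewrite /coupled_kernel exchange_big; apply: eq_bigr => x _ /=.
rewrite exchange_big -(J_marg1 A B) big_distrl; apply: eq_bigr => y _ /=.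
by rewrite -big_distrr /= -big_distrr /= sumr_indicator mulr1.
Qed.

Lemma coupled_kernel_marginal2 A B B' :
  (forall A B y, \sum_x J A B x y = w2 B y) ->
  \sum_A' coupled_kernel J (A, B) (A', B') = pushforward w2 B B'.
Proof.
move=> J_marg2; rewrite /coupled_kernel; under eq_bigr do rewrite exchange_big.
rewrite exchange_big; apply: eq_bigr => y _ /=.
rewrite exchange_big -(J_marg2 A B) big_distrl; apply: eq_bigr => x _ /=.
by rewrite -big_distrr /= -big_distrl /= sumr_indicator mul1r.
Qed.

Lemma coupling_kernel_coupled (P1 P2 : {set V} -> {set V} -> R) :
  P1 =2 pushforward w1 -> P2 =2 pushforward w2 ->
  (forall A B x y, 0 <= J A B x y) ->
  (forall A B x, \sum_y J A B x y = w1 A x) ->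
  (forall A B y, \sum_x J A B x y = w2 B y) ->
  coupling_kernel P1 P2 (coupled_kernel J).
Proof.
move=> P1E P2E J_ge0 J_marg1 J_marg2; split=> [p q|]; first exact: coupled_kernel_ge0.
by split=> A B S'; rewrite ?P1E ?P2E (coupled_kernel_marginal1, coupled_kernel_marginal2).
Qed.

Lemma coupled_kernel_eq0 (rel_AB : rel {set V}) A B A' B' :
  (forall x y, J A B x y != 0 -> rel_AB (update A x) (update B y)) ->
  ~~ rel_AB A' B' -> coupled_kernel J (A, B) (A', B') = 0.
Proof.
move=> J_rel not_rel'; apply: big1 => x _; apply: big1 => y _ /=.
have [->|/J_rel rel_xy] := eqVneq (J A B x y) 0; first by rewrite mul0r.
case: eqP => [eA|_]; case: eqP => [eB|_]; rewrite ?mul0r ?mulr0 //.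
by move: not_rel'; rewrite eA eB rel_xy.
Qed.

End CoupledKernel.

Lemma chain_law_eq0 (R : realType) (V : finType)
    (K : {set V} * {set V} -> {set V} * {set V} -> R) (rel_AB : rel {set V}) :
  (forall A B A' B', rel_AB A B -> ~~ rel_AB A' B' -> K (A, B) (A', B') = 0) ->
  forall A0 B0 t A B, rel_AB A0 B0 -> ~~ rel_AB A B -> chain_law K (A0, B0) t (A, B) = 0.
Proof.
move=> K_closed A0 B0 t; elim: t => [|t IHt] A B rel0 not_rel /=.
  by case: eqP not_rel => // -[-> ->]; rewrite rel0.
apply: big1 => -[A1 B1] _; have [rel1|not_rel1] := boolP (rel_AB A1 B1).
  by rewrite K_closed ?mulr0.
by rewrite IHt ?mul0r.
Qed.

Lemma copy_typeS (V : finType) (A B : {set V}) u v :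
  A \subset B -> copy_type A u v \subset copy_type B u v.
Proof.
move=> sAB; rewrite /copy_type; case: ifP => uA.
  by rewrite (subsetP sAB _ uA) setUS.
case: ifP => _; last exact: setSD.
exact: subset_trans (subD1set A v) (subset_trans sAB (subsetUr _ _)).
Qed.

Lemma copy_type_wild_sub_mutant (V : finType) (A B : {set V}) u1 v1 u2 v2 :
  A \subset B -> u1 \notin B -> u2 \in B ->
  copy_type A u1 v1 \subset copy_type B u2 v2.
Proof.
move=> sAB u1B u2B; rewrite /copy_type u2B ifN; last exact: contra (subsetP sAB u1) u1B.
exact: subset_trans (subD1set A v1) (subset_trans sAB (subsetUr _ _)).
Qed.

Section MixedUpdating.
Variables (R : realType) (V : finType) (adj : rel V).
Implicit Types (r delta : R) (S A B : {set V}) (u v : V).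

Definition copy_pair S (x : V * V) : {set V} := copy_type S x.1 x.2.

Definition fit_share (r : R) S (P : pred V) (u : V) : R :=
  fit r S u / \sum_(w | P w) fit r S w.

Definition dB_pair (r : R) S (x : V * V) : R :=
  (adj x.2 x.1)%:R * ((#|V|%:R)^-1 * fit_share r S [in nbhd adj x.2] x.1).

Definition Bd_pair (r : R) S (x : V * V) : R :=
  (adj x.1 x.2)%:R * (fit_share r S xpredT x.1 * ((deg adj x.1)%:R)^-1).

Definition mixed_pair (delta r : R) S (x : V * V) : R :=
  delta * dB_pair r S x + (1 - delta) * Bd_pair r S x.

Lemma dB_prob_pushforward r : dB_prob adj r =2 pushforward copy_pair (dB_pair r).
Proof.
move=> S S'; rewrite /pushforward sumr_pair.
rewrite exchange_big; apply: eq_bigr => v _; rewrite big_mkcond; apply: eq_bigr => u _.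
by rewrite /dB_pair /=; case: (adj v u); rewrite ?mul1r ?mul0r.
Qed.

Lemma Bd_prob_pushforward r : Bd_prob adj r =2 pushforward copy_pair (Bd_pair r).
Proof.
move=> S S'; rewrite /pushforward sumr_pair.
apply: eq_bigr => u _; rewrite big_mkcond; apply: eq_bigr => v _.
by rewrite /Bd_pair /=; case: (adj u v); rewrite ?mul1r ?mul0r ?mulrA.
Qed.

Lemma mixed_P_pushforward delta r :
  mixed_P adj delta r =2 pushforward copy_pair (mixed_pair delta r).
Proof.
move=> S S'; rewrite /mixed_P dB_prob_pushforward Bd_prob_pushforward.
rewrite /pushforward !big_distrr -big_split; apply: eq_bigr => x _ /=.
by rewrite /mixed_pair [RHS]mulrDl -!mulrA.
Qed.

Lemma fit1 S u : fit (1 : R) S u = 1.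
Proof. exact: if_same. Qed.

Lemma fit_in r S u : u \in S -> fit r S u = r.
Proof. by rewrite /fit => ->. Qed.

Lemma fit_notin r S u : u \notin S -> fit r S u = 1.
Proof. by rewrite /fit => /negbTE ->. Qed.

Lemma fit_ge0 r S u : 0 <= r -> 0 <= fit r S u.
Proof. by rewrite /fit; case: ifP. Qed.

Lemma fit_ge1 r S u : 1 <= r -> 1 <= fit r S u.
Proof. by rewrite /fit; case: ifP. Qed.

Lemma fit_le r S u : 1 <= r -> fit r S u <= r.
Proof. by rewrite /fit; case: ifP. Qed.

Lemma sum_fit_gt0 r S (P : pred V) u : 0 < r -> P u -> 0 < \sum_(w | P w) fit r S w.
Proof.
move=> r_gt0 Pu; rewrite (bigD1 u) //= ltr_pwDl ?sumr_ge0 // => [|w _].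
  by rewrite /fit; case: ifP.
exact/fit_ge0/ltW.
Qed.

Lemma sum_fit_share r S (P : pred V) u :
  0 < r -> P u -> \sum_(w | P w) fit_share r S P w = 1.
Proof.
by move=> r_gt0 Pu; rewrite -big_distrl /= divff // gt_eqF // (sum_fit_gt0 _ r_gt0 Pu).
Qed.

Lemma fit_share_mutant r2 A B (P : pred V) u : 1 <= r2 -> P u -> u \in B ->
  fit_share 1 A P u <= fit_share r2 B P u.
Proof.
move=> r2_ge1 Pu uB; have r2_gt0 : 0 < r2 := lt_le_trans ltr01 r2_ge1.
have F1_gt0 := sum_fit_gt0 A ltr01 Pu; have F2_gt0 := sum_fit_gt0 B r2_gt0 Pu.
rewrite /fit_share fit1 fit_in // ler_pdivlMr // mulrAC ler_pdivrMr // mul1r.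
by rewrite big_distrr ler_sum // => w _ /=; rewrite fit1 mulr1 fit_le.
Qed.

Lemma fit_share_wild r2 A B (P : pred V) u : 1 <= r2 -> P u -> u \notin B ->
  fit_share r2 B P u <= fit_share 1 A P u.
Proof.
move=> r2_ge1 Pu uB; have r2_gt0 : 0 < r2 := lt_le_trans ltr01 r2_ge1.
have F1_gt0 := sum_fit_gt0 A ltr01 Pu; have F2_gt0 := sum_fit_gt0 B r2_gt0 Pu.
rewrite /fit_share fit1 fit_notin // !mul1r lef_pV2 ?posrE //.
by rewrite ler_sum // => w _; rewrite fit1 fit_ge1.
Qed.

Hypothesis no_isolated : forall v : V, exists u : V, adj v u.

Lemma deg_gt0 u : (0 < deg adj u)%N.
Proof. by have [w adj_uw] := no_isolated u; apply/card_gt0P; exists w; rewrite inE. Qed.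

Lemma sum_adj u : \sum_v ((adj u v)%:R : R) = (deg adj u)%:R.
Proof.
rewrite (eq_bigr (fun v => if v \in nbhd adj u then 1 else 0)) => [|v _].
  by rewrite -big_mkcond sumr_const.
by rewrite inE; case: (adj u v).
Qed.

Lemma sum_dB_pair r S : 0 < r -> (0 < #|V|)%N -> \sum_x dB_pair r S x = 1.
Proof.
move=> r_gt0 V_gt0; rewrite sumr_pair exchange_big /=.
transitivity (\sum_(v : V) (#|V|%:R)^-1 : R).
  apply: eq_bigr => v _; have [u adj_vu] := no_isolated v.
  have nbhd_u : u \in nbhd adj v by rewrite inE.
  transitivity ((#|V|%:R)^-1 * \sum_(w in nbhd adj v) fit_share r S [in nbhd adj v] w).
    rewrite big_distrr [RHS]big_mkcond; apply: eq_bigr => w _ /=.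
    by rewrite /dB_pair /= inE; case: (adj v w); rewrite ?mul1r ?mul0r.
  by rewrite (sum_fit_share S (P := [in nbhd adj v]) r_gt0 nbhd_u) mulr1.
by rewrite sumr_const -(mulr_natr (#|V|%:R^-1)) mulVf // pnatr_eq0 -lt0n.
Qed.

Lemma sum_Bd_pair r S : 0 < r -> (0 < #|V|)%N -> \sum_x Bd_pair r S x = 1.
Proof.
move=> r_gt0 /card_gt0P[u0 _].
rewrite sumr_pair -(sum_fit_share S r_gt0 (isT : xpredT u0)).
apply: eq_bigr => u _; rewrite /Bd_pair /= -big_distrl /= sum_adj mulrC divfK //.
by rewrite pnatr_eq0 -lt0n deg_gt0.
Qed.

Lemma sum_mixed_pair delta r S :
  0 < r -> (0 < #|V|)%N -> \sum_x mixed_pair delta r S x = 1.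
Proof.
move=> r_gt0 V_gt0; rewrite big_split /= -!big_distrr /=.
by rewrite sum_dB_pair // sum_Bd_pair // !mulr1 addrC subrK.
Qed.

Lemma sum_mixed_pair_eq delta r r' S S' : 0 < r -> 0 < r' ->
  \sum_x mixed_pair delta r S x = \sum_x mixed_pair delta r' S' x.
Proof.
move=> r_gt0 r'_gt0; have [V0|V_gt0] := posnP #|V|; last by rewrite !sum_mixed_pair.
by rewrite !sumr_pair !big_pred0 // => v; apply: card0_eq V0 v.
Qed.

Section MonotoneCoupling.
Variables (delta r2 : R).
Hypotheses (delta_ge0 : 0 <= delta) (delta_le1 : delta <= 1) (r2_ge1 : 1 <= r2).

Lemma mixed_pair_ge0 r S x : 0 <= r -> 0 <= mixed_pair delta r S x.
Proof.
move=> r_ge0; have delta'_ge0 : 0 <= 1 - delta by rewrite subr_ge0.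
rewrite addr_ge0 ?mulr_ge0 ?invr_ge0 ?ler0n ?fit_ge0 ?sumr_ge0 // => w _; exact: fit_ge0.
Qed.

Lemma mixed_pair_le r r' S S' u v :
  (forall P : pred V, P u -> fit_share r S P u <= fit_share r' S' P u) ->
  mixed_pair delta r S (u, v) <= mixed_pair delta r' S' (u, v).
Proof.
move=> share_le; apply: lerD; apply: ler_wpM2l; rewrite ?subr_ge0 // /dB_pair /Bd_pair /=.
  case adj_vu: (adj v u); rewrite ?mul0r // !mul1r ler_wpM2l ?invr_ge0 ?ler0n //.
  by apply: share_le; rewrite inE.
by case: (adj u v); rewrite ?mul0r // !mul1r ler_wpM2r ?invr_ge0 ?ler0n // share_le.
Qed.

Definition mixed_pair_coupling A B : V * V -> V * V -> R :=
  maximal_coupling (mixed_pair delta 1 A) (mixed_pair delta r2 B).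

(* Off the diagonal, chain 1 draws a wild-type parent of [B] and chain 2 a
   mutant parent of [B]. *)
Lemma mixed_pair_coupling_subset A B x y : A \subset B ->
  mixed_pair_coupling A B x y != 0 -> copy_pair A x \subset copy_pair B y.
Proof.
move=> sAB; have [<- _|neq_xy /(maximal_coupling_offdiag neq_xy)[lt_x lt_y]] := eqVneq x y.
  exact: copy_typeS.
apply: copy_type_wild_sub_mutant => //.
  case: x lt_x {neq_xy} => u1 v1 lt_x.
  apply: contraTN lt_x => u1B; rewrite -leNgt mixed_pair_le // => P Pu1.
  exact: fit_share_mutant.
case: y lt_y {neq_xy} => u2 v2 lt_y.
apply: contraTT lt_y => u2B; rewrite -leNgt mixed_pair_le // => P Pu2.
exact: fit_share_wild.
Qed.

End MonotoneCoupling.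

End MixedUpdating.

Unset Implicit Arguments.

Theorem mainTheorem13 (R : realType) (V : finType) (adj : rel V)
  (adj_sym : symmetric adj) (adj_irr : irreflexive adj)
  (no_isolated : forall v : V, exists u : V, adj v u)
  (delta r2 : R) (hdelta0 : 0 <= delta) (hdelta1 : delta <= 1)
  (hr2 : 1 <= r2) (S0 : {set V}) :
  exists K : {set V} * {set V} -> {set V} * {set V} -> R,
    coupling_kernel (mixed_P adj delta 1) (mixed_P adj delta r2) K /\
    forall (t : nat) (x : {set V} * {set V}),
      0 < chain_law K (S0, S0) t x -> x.1 \subset x.2.
Proof.
have r2_gt0 : 0 < r2 := lt_le_trans ltr01 hr2.
have sum_eq A B : \sum_x mixed_pair adj delta 1 A x = \sum_x mixed_pair adj delta r2 B x.
  exact: sum_mixed_pair_eq.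
pose K := coupled_kernel (copy_pair (V := V)) (mixed_pair_coupling adj delta r2).
pose subset_rel : rel {set V} := fun A B => A \subset B.
have K_closed A B A' B' : subset_rel A B -> ~~ subset_rel A' B' -> K (A, B) (A', B') = 0.
  move=> sAB; apply: coupled_kernel_eq0 => x y; exact: mixed_pair_coupling_subset.
exists K; split.
  apply: coupling_kernel_coupled; try exact: mixed_P_pushforward.
  - move=> A B x y; apply: maximal_coupling_ge0 => z;
      by apply: mixed_pair_ge0 => //; apply: ltW.
  - by move=> A B x; apply: maximal_coupling_marginal1.
  - by move=> A B y; apply: maximal_coupling_marginal2.
move=> t [A B] /= law_gt0; apply: contraTT law_gt0 => not_sAB.
by rewrite (chain_law_eq0 K_closed _ (subxx S0) not_sAB) ltxx.
Qed.
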